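(* In the transactional panorama model described in the context, answering every read transaction so as to maintain consistency-fresh ($C_f$), i.e., returning the states of its views from the latest version of the view graph, also maintains monotonicity; however, consistency-fresh and visibility cannot always be maintained together (there are executions in which the states returned under consistency-fresh contain a UC).
   Context: A view graph is a directed acyclic graph on a fixed set $N$ of nodes (source data and views); there is an edge $n_j \to n_i$ if view $n_i$ takes $n_j$ as input, and the dependents of a node are the nodes reachable from it. The view graph is multi-versioned. Write transactions $w^{t_1},\dots,w^{t_n}$ (timestamps $t_1<\dots<t_n$, starting from an initial version $G^{t_0}$) each modify some source nodes and must recompute their dependents; they are processed one at a time in timestamp order. Write transaction $w^{t_i}$ creates version $G^{t_i}=(E,N,V^{t_i})$, where for each node $n_k$ the set $V^{t_i}$ contains: the result $v_k^{t_i}$ if $w^{t_i}$ updates $n_k$ and has already computed it; a placeholder $UC_k^{t_i}$ (''under computation'') if $w^{t_i}$ updates $n_k$ but has not yet computed it; or the result of $n_k$ from the previous version if $w^{t_i}$ does not update $n_k$. The latest version is the version created by the most recent write transaction (possibly not yet committed). The timestamp of a returned state is the timestamp of the version it belongs to. Read transactions $r^{s_1},\dots,r^{s_m}$ ($s_1<\dots<s_m$) each read the set of views in the user's current viewport (a subset of $N$, which may change between reads) and return immediately, without waiting, a set $H^{s_i}$ containing one state (a view result or a UC) per view read. Monotonicity: for any view $n_k$ read by two transactions $r^{s_i}, r^{s_j}$ with $s_i<s_j$, returning states with timestamps $t_p$ and $t_q$, we have $t_p \le t_q$. Visibility: no $H^{s_i}$ contains a UC. Consistency: for each $r^{s_i}$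 there is a version $G^{t_j}=(E,N,V^{t_j})$ with $t_j\le s_i$ and $H^{s_i}\subseteq V^{t_j}$. *)

From mathcomp Require Import all_boot.
Set Implicit Arguments. Unset Strict Implicit. Unset Printing Implicit Defensive.

(* Time is a common discrete timeline [nat] on which write timestamps
   t_0 < t_1 < ... < t_n and read timestamps s_1 < ... < s_m live. *)

Inductive state (R : Type) := Res of R | UC.
Arguments UC {R}.

Definition sources (N : finType) (E : rel N) : {set N} :=
  [set k | [forall j, ~~ E j k]].

Definition updated (N : finType) (E : rel N) (S : {set N}) : {set N} :=
  [set k | [exists x in S, connect E x k]].

Record execution (N : finType) (R : Type) := Execution {
  E : rel N;                                   (* E j i : edge n_j -> n_i *)
  E_acyclic : forall x y, E x y -> ~~ connect E y x;
  nw : nat;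
  wt : nat -> nat;                             (* wt 0 = t_0 (initial), wt i = t_i *)
  wt_incr : forall i, i < nw -> wt i < wt i.+1;
  src : nat -> {set N};                        (* source nodes modified by w^{t_i} *)
  src_sources : forall i, src i \subset sources E;
  res : nat -> N -> R;                         (* res i k = v_k^{t_i} (res 0 = initial) *)
  done : nat -> nat -> {set N};                (* nodes computed by w^{t_i} by time s *)
  done_start : forall i s, s < wt i -> done i s = set0;
  done_mono : forall i s1 s2, s1 <= s2 -> done i s1 \subset done i s2;
  (* writes are processed one at a time: w^{t_i} has computed all its
     updated nodes before w^{t_{i+1}} starts *)
  done_finish : forall i s, 0 < i -> i < nw -> wt i.+1 <= s ->
                  updated E (src i) \subset done i s
}.

Section Model.
Variables (N : finType) (R : Type) (X : execution N R).

Definition upd (i : nat) : {set N} := updated (E X) (src X i).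

(* content of version G^{t_i} at time s, node k *)
Fixpoint vstate (i s : nat) (k : N) : state R :=
  match i with
  | 0 => Res (res X 0 k)
  | i'.+1 => if k \in upd i then
               (if k \in done X i s then Res (res X i k) else UC)
             else vstate i' s k
  end.

Definition latest (s : nat) : nat := \max_(i < (nw X).+1 | wt X i <= s) i.

Definition Cf_answer (rs : nat -> nat) (j : nat) (k : N) : nat * state R :=
  (wt X (latest (rs j)), vstate (latest (rs j)) (rs j) k).

Definition valid_reads (m : nat) (rs : nat -> nat) : Prop :=
  (forall j, j.+1 < m -> rs j < rs j.+1) /\
  (forall j, j < m -> wt X 0 < rs j) /\
  (forall j i, j < m -> i <= nw X -> rs j != wt X i).
End Model.

(* Properties of an answer function H : read index -> node -> (timestamp, state)
   for m reads with viewports vp. *)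
Definition monotonic (N : finType) (R : Type) (m : nat) (vp : nat -> {set N})
  (H : nat -> N -> nat * state R) : Prop :=
  forall i j k, i < j -> j < m -> k \in vp i -> k \in vp j ->
    (H i k).1 <= (H j k).1.

Definition visible (N : finType) (R : Type) (m : nat) (vp : nat -> {set N})
  (H : nat -> N -> nat * state R) : Prop :=
  forall j k, j < m -> k \in vp j -> (H j k).2 <> UC.

From mathcomp Require Import all_boot.

Set Implicit Arguments.
Unset Strict Implicit.
Unset Printing Implicit Defensive.

(* The latest version at time s is the most recent write started by s, so its
   index, and hence its timestamp, is a nondecreasing function of s; reads
   answered from it can therefore never go back in time.  Visibility fails as
   soon as a read arrives while the most recent write is still computing: the
   latest version then holds UC for the nodes that write updates. *)

Section LatestVersion.
Variables (N : finType) (R : Type) (X : execution N R).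

Lemma wt_homo : {in [pred i | i <= nw X] &, {homo wt X : i j / i <= j}}.
Proof.
apply: (homo_leq_in leqnn leq_trans) => [i j _ + k|i _]; rewrite !inE.
- by move=> jX /andP [_ kj]; apply: leq_trans (ltnW kj) jX.
- by move=> iX; apply: ltnW (wt_incr iX).
Qed.

Lemma latest_le_nw s : latest X s <= nw X.
Proof. by apply/bigmax_leqP => i _; rewrite -ltnS. Qed.

Lemma latest_homo : {homo latest X : s1 s2 / s1 <= s2}.
Proof.
move=> s1 s2 s12; apply/bigmax_leqP => i started.
apply: (leq_bigmax_cond (F := fun i : 'I_(nw X).+1 => nat_of_ord i)).
exact: leq_trans started s12.
Qed.

Lemma valid_reads_homo m rs :
  valid_reads X m rs -> {in [pred j | j < m] &, {homo rs : i j / i <= j}}.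
Proof.
move=> [rs_incr _].
apply: (homo_leq_in leqnn leq_trans) => [i j _ + k|i _]; rewrite !inE.
- by move=> jm /andP [_ kj]; apply: ltn_trans kj jm.
- by move=> im; apply: ltnW (rs_incr i im).
Qed.

Lemma Cf_answer_monotonic m rs vp :
  valid_reads X m rs -> monotonic m vp (Cf_answer X rs).
Proof.
move=> reads i j k ij jm _ _ /=.
apply: wt_homo; rewrite ?inE ?latest_le_nw //.
apply: latest_homo; apply: (valid_reads_homo reads); rewrite ?inE ?(ltnW ij) //.
exact: ltn_trans ij jm.
Qed.

End LatestVersion.

(* A single node, updated by the write at time 1, which has computed nothing
   when it is read at time 2. *)
Definition stalled_write : execution unit unit.
Proof.
refine (@Execution unit unit (fun _ _ => false) _ 1 id _
  (fun _ => setT) _ (fun _ _ => tt) (fun _ _ => set0) _ _ _) => //.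
- by move=> i; apply/subsetP => k _; rewrite inE; apply/forallP.
- by case=> [|[|i]].
Defined.

Lemma stalled_write_valid_reads : valid_reads stalled_write 1 (fun _ => 2).
Proof. by split; [case|split; [case|move=> [|j] [|[|i]]]]. Qed.

Lemma stalled_write_Cf_answer : Cf_answer stalled_write (fun _ => 2) 0 tt = (1, UC).
Proof.
have latest2 : latest stalled_write 2 = 1.
  by rewrite /latest big_mkcond !big_ord_recr big_ord0.
have upd1 : tt \in upd stalled_write 1.
  by rewrite inE; apply/existsP; exists tt; rewrite inE connect0.
by rewrite /Cf_answer latest2 /= upd1 inE.
Qed.

Theorem theorem2p5 :
  (forall (N : finType) (R : Type) (X : execution N R) (m : nat)
          (rs : nat -> nat) (vp : nat -> {set N}),
      valid_reads X m rs -> monotonic m vp (Cf_answer X rs))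
  /\
  (exists (N : finType) (R : Type) (X : execution N R) (m : nat)
          (rs : nat -> nat) (vp : nat -> {set N}),
      valid_reads X m rs /\ ~ visible m vp (Cf_answer X rs)).
Proof.
split=> [N R X m rs vp|]; first exact: Cf_answer_monotonic.
exists unit, unit, stalled_write, 1, (fun _ => 2), (fun _ => setT).
split; first exact: stalled_write_valid_reads.
by move=> visible_Cf; apply: (visible_Cf 0 tt); rewrite ?inE ?stalled_write_Cf_answer.
Qed.
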